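(* Assume the setting of the context, with $\lambda_d=C-\bar\lambda$, $\rho=\bar\lambda/C\in(0,1)$, and buffer size $K=\dot{\mathbf K}=b\bar\lambda\left[\frac{\alpha}{\beta}\left(\frac{\rho}{1-\rho}-1\right)-1\right]\ge 0$, and let $\mathbf P_d=1-\rho$. Let $\dot{\mathbf D}_q$ be the waiting time of admitted fluid as defined in the context, and let $\dot{\mathbf D}=aG+\dot{\mathbf D}_q$ where $a>0$ is a constant and $G$ is independent of $\dot{\mathbf D}_q$ with $\Pr\{G=g\}=\mathbf P_d^{\,g}(1-\mathbf P_d)$, $g=0,1,2,\dots$. Then $$E[\dot{\mathbf D}]=a\frac{1-\rho}{\rho}+E[\dot{\mathbf D}_q],\qquad \mathrm{var}[\dot{\mathbf D}]=a^2\frac{1-\rho}{\rho^2}+\mathrm{var}[\dot{\mathbf D}_q],$$ where $$E[\dot{\mathbf D}_q]=b\cdot\frac{\left[\left(2\frac{\alpha}{\beta}+1\right)\rho-\left(1+\frac{\alpha}{\beta}\right)\right]\left[\left(2-\frac{\beta}{\alpha}\right)\rho+\left(\frac{\beta}{\alpha}-1\right)\right]}{2\rho(1-\rho)},$$ $$E[\dot{\mathbf D}_q^2]=b^2\cdot\frac{\left[(2\rho-1)\frac{\alpha}{\beta}-(1-\rho)\right]^2\left[(1-\rho)\frac{2\beta}{\alpha}+2\rho-1\right]}{3(1-\rho)^2}.$$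
   Context: Fluid queue model: $\alpha,\beta>0$, $b=1/(\alpha+\beta)$, $\hat\lambda>0$, $\bar\lambda=\hat\lambda\beta/(\alpha+\beta)$, $C>\bar\lambda$, $\lambda_d\ge0$. A buffer of capacity $K$ is drained at rate $C$ whenever nonempty. A two-state continuous-time Markov chain $S\in\{\mathrm{on},\mathrm{off}\}$ leaves on at rate $\alpha$ and off at rate $\beta$; fluid arrives at rate $\hat\lambda+\lambda_d$ when on and $\lambda_d$ when off. The content $x\in[0,K]$ increases at rate (arrival rate $-C$) when positive and $x<K$, decreases at rate $C-$(arrival rate) when positive and $x>0$; at $x=K$ excess fluid is lost. In stationarity let $p_1(X)$, $p_0(X)$ be the densities of $x$ on $(0,K)$ jointly with $S=\mathrm{on}$, $S=\mathrm{off}$, $\Pr\{x=0\}$ the atom at empty (off state) and $\Pr\{x=K\}$ the atom at full (on state); let $\Delta=(\hat\lambda+\lambda_d-C)\Pr\{x=K\}$ and $R=\bar\lambda+\lambda_d-\Delta$ (rate of admitted fluid). The waiting time $\mathbf D_q$ of admitted fluid (FIFO, waits $X/C$ when entering at content $X$) is the random variable with an atom $\lambda_d\Pr\{x=0\}/R$ at $0$, density $\big[(\hat\lambda+\lambda_d)p_1(tC)+\lambda_d p_0(tC)\big]C/R$ for $t\in(0,K/C)$, and an atom $C\Pr\{x=K\}/R$ at $K/C$. $\dot{\mathbf D}_q$ denotes $\mathbf D_q$ under $\lambda_d=C-\bar\lambda$ and $K=\dot{\mathbf K}$. *)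

From Stdlib Require Import Reals.
Open Scope R_scope.

Definition integral_is (f : R -> R) (a b v : R) : Prop :=
  exists pr : Riemann_integrable f a b, RiemannInt pr = v.

Definition lam_bar (al be lh : R) : R := lh * be / (al + be).

(** Stationary distribution of the buffer content, with densities p1 (on),
    p0 (off) on [0,K], atom P0 at x=0 (off) and atom PK at x=K (on),
    characterised by the stationary Kolmogorov forward equations with their
    boundary (flux) conditions and normalisation.  Drifts:
    r1 = \hat\lambda + \lambda_d - C  (> 0 in the on state),
    r0 = \lambda_d - C               (< 0 in the off state). *)
Definition is_stationary (al be lh ld C K : R) (p1 p0 : R -> R) (P0 PK : R)
  : Prop :=
  let r1 := lh + ld - C in
  let r0 := ld - C in
  0 <= P0 /\ 0 <= PK /\
  (forall x, 0 <= x <= K -> 0 <= p1 x /\ 0 <= p0 x) /\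
  (forall x, 0 <= x <= K ->
     derivable_pt_lim p1 x ((- al * p1 x + be * p0 x) / r1) /\
     derivable_pt_lim p0 x ((al * p1 x - be * p0 x) / r0)) /\
  r1 * p1 0 = be * P0 /\
  - r0 * p0 0 = be * P0 /\
  r1 * p1 K = al * PK /\
  - r0 * p0 K = al * PK /\
  (exists I, integral_is (fun x => p1 x + p0 x) 0 K I /\ P0 + PK + I = 1).

(** rate of admitted fluid R = \bar\lambda + \lambda_d - Delta,
    Delta = (\hat\lambda + \lambda_d - C) Pr{x=K} *)
Definition R_adm (al be lh ld C PK : R) : R :=
  lam_bar al be lh + ld - (lh + ld - C) * PK.

(** [Dq_expect ... h v]:  E[h(D_q)] = v, where D_q has an atom
    ld*P0/R at 0, density ((lh+ld) p1(tC) + ld p0(tC)) C/R on (0,K/C)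
    and an atom C*PK/R at K/C. *)
Definition Dq_expect (al be lh ld C K : R) (p1 p0 : R -> R) (P0 PK : R)
  (h : R -> R) (v : R) : Prop :=
  let Ra := R_adm al be lh ld C PK in
  exists I,
    integral_is
      (fun t => h t * (((lh + ld) * p1 (t * C) + ld * p0 (t * C)) * C / Ra))
      0 (K / C) I /\
    v = ld * P0 / Ra * h 0 + I + C * PK / Ra * h (K / C).

Definition geom_pmf (Pd : R) (g : nat) : R := Pd ^ g * (1 - Pd).

(** [D_expect ... h v]:  E[h(a G + D_q)] = v with G independent of D_q,
    i.e. v = sum_g Pr{G=g} E[h(a g + D_q)]. *)
Definition D_expect (al be lh ld C K : R) (p1 p0 : R -> R) (P0 PK : R)
  (a Pd : R) (h : R -> R) (v : R) : Prop :=
  exists vals : nat -> R,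
    (forall g : nat,
        Dq_expect al be lh ld C K p1 p0 P0 PK (fun t => h (a * INR g + t)) (vals g)) /\
    infinite_sum (fun g => geom_pmf Pd g * vals g) v.

From Stdlib Require Import Reals Lra Lia.
From Coquelicot Require Import Coquelicot.
Open Scope R_scope.

(** With [ld = C - lam_bar] the mean drift of the content,
    [be (lh + ld - C) + al (ld - C)], vanishes.  The proof rests on the
    observation that the stationary law is then flat:

    - the stationary equations conserve the net flux [r1 p1 + r0 p0], which
      is zero at the empty boundary, so at zero mean drift [p1' = p0' = 0]
      ([stationary_zero_flux], [zero_drift_flat_densities]); the boundary
      conditions and normalisation then fix both atoms
      ([flat_stationary_atoms]);
    - hence [D_q] is a mixture of two atoms and a uniform density on
      [[0, K/C]], and the expectation of any quadratic is an explicit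
      [mixture_mean] ([flat_Dq_expect_quadratic]); solving the normalisation
      and simplifying gives the closed forms of [E D_q] and [E D_q^2]
      ([critical_Dq_moments]);
    - [D = a G + D_q] with [G] geometric: conditioning on [G = g] and the
      series [sum g x^g], [sum g^2 x^g] ([geom_moments]) give [E D] and
      [E D^2] ([D_expect_mean], [D_expect_second_moment]). *)

Lemma is_series_lin2 (f g : nat -> R) (F G p q : R) :
  is_series f F -> is_series g G ->
  is_series (fun n => p * f n + q * g n) (p * F + q * G).
Proof.
  intros Hf Hg.
  apply (is_series_plus (K := R_AbsRing) (V := R_NormedModule));
    apply (is_series_scal (K := R_AbsRing) (V := R_NormedModule)); assumption.
Qed.

Lemma is_series_lin3 (f g h : nat -> R) (F G H p q r : R) :
  is_series f F -> is_series g G -> is_series h H ->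
  is_series (fun n => p * f n + q * g n + r * h n) (p * F + q * G + r * H).
Proof.
  intros Hf Hg Hh.
  apply (is_series_ext (fun n => 1 * (p * f n + q * g n) + r * h n)); [intros n; simpl; ring |].
  replace (p * F + q * G + r * H) with (1 * (p * F + q * G) + r * H) by ring.
  apply is_series_lin2; [apply is_series_lin2 |]; assumption.
Qed.

(** For [0 < x < 1] the series [sum n^2 x^n] converges: it is dominated by
    [sum (n+1)^2 x^n], whose terms never vanish, so the ratio test applies. *)
Lemma ex_series_sq_geom (x : R) : 0 < x < 1 -> ex_series (fun n => INR n ^ 2 * x ^ n).
Proof.
  intros Hx.
  assert (Hshift : ex_series (fun n => INR (S n) ^ 2 * x ^ n)).
  { apply ex_series_Rabs, (ex_series_DAlembert _ x); [lra | |].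
    - intros n. apply Rmult_integral_contrapositive_currified;
        apply pow_nonzero; [apply not_0_INR; discriminate | lra].
    - assert (Hinv : is_lim_seq (fun n => 1 + / INR (S n)) (1 + 0)).
      { apply is_lim_seq_plus'; [apply is_lim_seq_const |].
        apply (is_lim_seq_incr_1 (fun n => / INR n)).
        replace (Finite 0) with (Rbar_inv p_infty) by reflexivity.
        apply is_lim_seq_inv; [apply is_lim_seq_INR | discriminate]. }
      apply is_lim_seq_ext with (fun n => x * ((1 + / INR (S n)) * (1 + / INR (S n)))).
      + intros n. pose proof (pos_INR n).
        rewrite Rabs_pos_eq.
        * rewrite !S_INR. simpl. field. split; [apply pow_nonzero |]; lra.
        * apply Rmult_le_pos; [apply Rmult_le_pos; apply pow_le; [apply pos_INR | lra] |].
          left. apply Rinv_0_lt_compat, Rmult_lt_0_compat; apply pow_lt; [apply lt_0_INR; lia | lra].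
      + assert (Hlim := is_lim_seq_mult' _ _ _ _ (is_lim_seq_const x)
                          (is_lim_seq_mult' _ _ _ _ Hinv Hinv)).
        now replace (x * ((1 + 0) * (1 + 0))) with x in Hlim by ring. }
  apply (ex_series_le (K := R_AbsRing) (V := R_CompleteNormedModule)) with (2 := Hshift).
  intros n. change (Rabs (INR n ^ 2 * x ^ n) <= INR (S n) ^ 2 * x ^ n).
  pose proof (pos_INR n). pose proof (pow_le x n ltac:(lra)).
  rewrite S_INR, Rabs_pos_eq by nra. nra.
Qed.

Lemma ex_series_lin_geom (x : R) : 0 < x < 1 -> ex_series (fun n => INR n * x ^ n).
Proof.
  intros Hx.
  apply (ex_series_le (K := R_AbsRing) (V := R_CompleteNormedModule)) with (2 := ex_series_sq_geom x Hx).
  intros n. change (Rabs (INR n * x ^ n) <= INR n ^ 2 * x ^ n).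
  pose proof (pos_INR n). pose proof (pow_le x n ltac:(lra)).
  rewrite Rabs_pos_eq by nra.
  apply Rmult_le_compat_r; [lra |]. destruct n; [simpl; lra |].
  rewrite S_INR. pose proof (pos_INR n). nra.
Qed.

Lemma is_series_geom_unit (x : R) : 0 < x < 1 -> is_series (fun n => x ^ n) (/ (1 - x)).
Proof. intros Hx. apply is_series_geom. rewrite Rabs_pos_eq; lra. Qed.

Lemma series_shift (f : nat -> R) (x l l' : R) : f 0%nat = 0 ->
  is_series (fun n => f n * x ^ n) l -> is_series (fun n => f (S n) * x ^ n) l' ->
  l = x * l'.
Proof.
  intros Hf0 Hl Hl'.
  transitivity (Series (fun n => f (S n) * x ^ S n));
    [symmetry | ]; apply is_series_unique.
  - apply (is_series_incr_1 (fun n => f n * x ^ n)).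
    rewrite Hf0, Rmult_0_l. change (plus l 0) with (l + 0). now rewrite Rplus_0_r.
  - apply (is_series_ext (fun n => x * (f (S n) * x ^ n))); [intros n; simpl; ring |].
    now apply (is_series_scal (K := R_AbsRing) (V := R_NormedModule)).
Qed.

Lemma is_series_lin_geom (x : R) : 0 < x < 1 ->
  is_series (fun n => INR n * x ^ n) (x / (1 - x) ^ 2).
Proof.
  intros Hx. destruct (ex_series_lin_geom x Hx) as [l1 H1].
  pose proof (is_series_geom_unit x Hx) as Hgeom.
  assert (Hl1 : l1 = x * (1 * l1 + 1 * / (1 - x))).
  { apply (series_shift (fun n => INR n) x); [reflexivity | exact H1 |].
    apply (is_series_ext (fun n => 1 * (INR n * x ^ n) + 1 * x ^ n));
      [intros n; rewrite S_INR; simpl; ring |].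
    now apply is_series_lin2. }
  assert (E : l1 * (1 - x) = x * / (1 - x)) by lra.
  replace (x / (1 - x) ^ 2) with l1; [exact H1 |].
  apply (Rmult_eq_reg_r (1 - x)); [rewrite E; field |]; lra.
Qed.

Lemma is_series_sq_geom (x : R) : 0 < x < 1 ->
  is_series (fun n => INR n ^ 2 * x ^ n) (x * (1 + x) / (1 - x) ^ 3).
Proof.
  intros Hx. destruct (ex_series_sq_geom x Hx) as [l2 H2].
  pose proof (is_series_geom_unit x Hx) as Hgeom.
  assert (Hl2 : l2 = x * (1 * l2 + 2 * (x / (1 - x) ^ 2) + 1 * / (1 - x))).
  { apply (series_shift (fun n => INR n ^ 2) x); [simpl; ring | exact H2 |].
    apply (is_series_ext (fun n => 1 * (INR n ^ 2 * x ^ n) + 2 * (INR n * x ^ n) + 1 * x ^ n));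
      [intros n; rewrite S_INR; simpl; ring |].
    apply is_series_lin3; [exact H2 | apply is_series_lin_geom | ]; assumption. }
  assert (E : l2 * (1 - x) = x * (2 * (x / (1 - x) ^ 2) + / (1 - x))) by lra.
  replace (x * (1 + x) / (1 - x) ^ 3) with l2; [exact H2 |].
  apply (Rmult_eq_reg_r (1 - x)); [rewrite E; field |]; lra.
Qed.

Lemma geom_moments (x u v w : R) : 0 < x < 1 ->
  infinite_sum (fun g => geom_pmf x g * (u + v * INR g + w * INR g ^ 2))
    (u + v * (x / (1 - x)) + w * (x * (1 + x) / (1 - x) ^ 2)).
Proof.
  intros Hx. apply is_series_Reals.
  pose proof (is_series_geom_unit x Hx) as Hgeom.
  pose proof (is_series_lin3 _ _ _ _ _ _ (u * (1 - x)) (v * (1 - x)) (w * (1 - x))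
                Hgeom (is_series_lin_geom x Hx) (is_series_sq_geom x Hx)) as H.
  apply (is_series_ext _ (fun g => geom_pmf x g * (u + v * INR g + w * INR g ^ 2))) in H;
    [| intros n; unfold geom_pmf; simpl; ring].
  replace (u + v * (x / (1 - x)) + w * (x * (1 + x) / (1 - x) ^ 2)) with
    (u * (1 - x) * / (1 - x) + v * (1 - x) * (x / (1 - x) ^ 2)
     + w * (1 - x) * (x * (1 + x) / (1 - x) ^ 3)) by (field; lra).
  exact H.
Qed.

Lemma zero_derivative_constant (f f' : R -> R) (K : R) :
  (forall x, 0 <= x <= K -> derivable_pt_lim f x (f' x)) ->
  (forall x, 0 <= x <= K -> f' x = 0) -> forall x, 0 <= x <= K -> f x = f 0.
Proof.
  intros Hd H0 x Hx. destruct (Req_dec x 0) as [-> | Hne]; [reflexivity |].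
  destruct (MVT_cor2 f f' 0 x) as [c [Hc Hcx]]; [lra | intros c Hc; apply Hd; lra |].
  rewrite H0 in Hc by lra. lra.
Qed.

Lemma integral_is_unique (f : R -> R) (a b v w : R) :
  integral_is f a b v -> integral_is f a b w -> v = w.
Proof. intros [p1 <-] [p2 <-]. apply RiemannInt_P5. Qed.

Lemma integral_quadratic (f : R -> R) (T D u v w : R) : 0 <= T ->
  (forall t, 0 <= t <= T -> f t = (u + v * t + w * t ^ 2) * D) ->
  integral_is f 0 T (D * (u * T + v * (T ^ 2 / 2) + w * (T ^ 3 / 3))).
Proof.
  intros HT Hf.
  set (F := fun t => D * (u * t + v * (t ^ 2 / 2) + w * (t ^ 3 / 3))).
  assert (HF : is_RInt f 0 T (F T - F 0)).
  { apply (is_RInt_ext (fun t => (u + v * t + w * t ^ 2) * D)).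
    - rewrite Rmin_left, Rmax_right by lra. intros t Ht. symmetry. apply Hf. lra.
    - apply (is_RInt_derive (V := R_CompleteNormedModule) F).
      + intros t _. unfold F. auto_derive; [auto | field].
      + intros t _. apply (ex_derive_continuous (K := R_AbsRing) (V := R_NormedModule)).
        unfold F. auto_derive. auto. }
  exists (ex_RInt_Reals_0 _ _ _ (ex_intro _ _ HF)).
  rewrite <- RInt_Reals, (is_RInt_unique _ _ _ _ HF). unfold F. field.
Qed.

(** In stationarity the net fluid flux [r1 p1 + r0 p0] is constant in the
    content level, and it vanishes at the empty boundary; hence it vanishes
    on all of [[0,K]]. *)
Lemma stationary_zero_flux (al be lh ld C K : R) (p1 p0 : R -> R) (P0 PK : R) :
  is_stationary al be lh ld C K p1 p0 P0 PK ->
  lh + ld - C <> 0 -> ld - C <> 0 ->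
  forall x, 0 <= x <= K -> (lh + ld - C) * p1 x + (ld - C) * p0 x = 0.
Proof.
  intros (_ & _ & _ & Hder & B1 & B2 & _) Hr1 Hr0 x Hx.
  set (r1 := lh + ld - C) in *. set (r0 := ld - C) in *.
  rewrite (zero_derivative_constant (fun y => r1 * p1 y + r0 * p0 y) (fun _ => 0) K);
    [lra | | reflexivity | exact Hx].
  intros y Hy. destruct (Hder y Hy) as [D1 D2].
  replace 0 with (r1 * ((- al * p1 y + be * p0 y) / r1) + r0 * ((al * p1 y - be * p0 y) / r0))
    by (field; auto).
  apply (derivable_pt_lim_plus (mult_real_fct r1 p1) (mult_real_fct r0 p0));
    apply derivable_pt_lim_scal; assumption.
Qed.

(** At zero mean drift [be r1 + al r0 = 0] the stationary densities are flat:
    the vanishing flux forces [p1'] to vanish, hence also [p0']. *)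
Lemma zero_drift_flat_densities (al be lh ld C K : R) (p1 p0 : R -> R) (P0 PK : R) :
  is_stationary al be lh ld C K p1 p0 P0 PK ->
  lh + ld - C <> 0 -> ld - C <> 0 ->
  be * (lh + ld - C) + al * (ld - C) = 0 ->
  forall x, 0 <= x <= K -> p1 x = p1 0 /\ p0 x = p0 0.
Proof.
  intros Hst Hr1 Hr0 Hdrift.
  pose proof (stationary_zero_flux _ _ _ _ _ _ _ _ _ _ Hst Hr1 Hr0) as Hflux.
  assert (Hp0 : forall x, 0 <= x <= K -> p0 x = - (lh + ld - C) * p1 x / (ld - C)).
  { intros x Hx. apply (Rmult_eq_reg_l (ld - C)); [| exact Hr0].
    pose proof (Hflux x Hx). field_simplify; [lra | exact Hr0]. }
  assert (Hp1 : forall x, 0 <= x <= K -> p1 x = p1 0).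
  { destruct Hst as (_ & _ & _ & Hder & _).
    apply (zero_derivative_constant p1 (fun y => (- al * p1 y + be * p0 y) / (lh + ld - C)) K).
    - intros y Hy. exact (proj1 (Hder y Hy)).
    - intros y Hy. rewrite (Hp0 y Hy).
      replace ((- al * p1 y + be * (- (lh + ld - C) * p1 y / (ld - C))) / (lh + ld - C))
        with (- p1 y * (be * (lh + ld - C) + al * (ld - C)) / ((lh + ld - C) * (ld - C)))
        by (field; auto).
      rewrite Hdrift. unfold Rdiv. ring. }
  intros x Hx. split; [now apply Hp1 |].
  now rewrite (Hp0 x Hx), (Hp0 0), (Hp1 x Hx) by lra.
Qed.

Lemma flat_stationary_atoms (al be lh ld C K : R) (p1 p0 : R -> R) (P0 PK : R) :
  is_stationary al be lh ld C K p1 p0 P0 PK -> 0 < al -> 0 < be -> 0 <= K ->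
  (forall x, 0 <= x <= K -> p1 x = p1 0 /\ p0 x = p0 0) ->
  P0 = (lh + ld - C) * p1 0 / be /\ PK = (lh + ld - C) * p1 0 / al /\
  P0 + PK + K * (p1 0 + p0 0) = 1.
Proof.
  intros (_ & _ & _ & _ & B1 & _ & BK & _ & I & HI & Hnorm) Hal Hbe HK Hflat.
  assert (Hint : I = (p1 0 + p0 0) * (1 * K + 0 * (K ^ 2 / 2) + 0 * (K ^ 3 / 3))).
  { apply (integral_is_unique _ _ _ _ _ HI), integral_quadratic; [exact HK |].
    intros t Ht. destruct (Hflat t Ht) as [-> ->]. ring. }
  destruct (Hflat K) as [HpK _]; [lra |]. rewrite HpK in BK.
  split; [| split].
  - apply (Rmult_eq_reg_l be); [rewrite B1; field |]; lra.
  - apply (Rmult_eq_reg_l al); [rewrite <- BK; field |]; lra.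
  - rewrite <- Hnorm, Hint. ring.
Qed.

Definition is_quadratic (h : R -> R) (u v w : R) : Prop :=
  forall t, h t = u + v * t + w * t ^ 2.

(** Mean of the quadratic [u + v t + w t^2] under the mixture of an atom of
    mass [w0] at [0], a constant density [D] on [[0,T]] and an atom of mass
    [wT] at [T]. *)
Definition mixture_mean (w0 D wT T u v w : R) : R :=
  w0 * u + D * (u * T + v * (T ^ 2 / 2) + w * (T ^ 3 / 3)) + wT * (u + v * T + w * T ^ 2).

Lemma mixture_mean_linear (w0 D wT T u v w : R) :
  mixture_mean w0 D wT T u v w
  = u * mixture_mean w0 D wT T 1 0 0 + v * mixture_mean w0 D wT T 0 1 0
    + w * mixture_mean w0 D wT T 0 0 1.
Proof. unfold mixture_mean. ring. Qed.

Lemma flat_Dq_expect_quadratic (al be lh ld C K : R) (p1 p0 : R -> R) (P0 PK c1 c0 : R)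
    (h : R -> R) (u v w : R) :
  0 < C -> 0 <= K ->
  (forall x, 0 <= x <= K -> p1 x = c1 /\ p0 x = c0) ->
  is_quadratic h u v w ->
  let Ra := R_adm al be lh ld C PK in
  let D := ((lh + ld) * c1 + ld * c0) * C / Ra in
  forall V, V = mixture_mean (ld * P0 / Ra) D (C * PK / Ra) (K / C) u v w ->
  Dq_expect al be lh ld C K p1 p0 P0 PK h V.
Proof.
  intros HC HK Hflat Hh Ra D V ->.
  set (T := K / C).
  assert (HT : 0 <= T) by (apply Rdiv_le_0_compat; lra).
  exists (D * (u * T + v * (T ^ 2 / 2) + w * (T ^ 3 / 3))). split.
  - apply integral_quadratic; [exact HT |]. intros t Ht.
    assert (HtC : 0 <= t * C <= K).
    { split; [nra |]. replace K with (T * C) by (unfold T; field; lra). nra. }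
    destruct (Hflat _ HtC) as [-> ->]. rewrite Hh. unfold D, Ra. ring.
  - unfold mixture_mean. rewrite !Hh. fold Ra T. ring.
Qed.

Section GeometricShift.
Variables (al be lh ld C K : R) (p1 p0 : R -> R) (P0 PK m1 m2 : R).
Hypothesis Dq_quadratic : forall h u v w, is_quadratic h u v w ->
  Dq_expect al be lh ld C K p1 p0 P0 PK h (u + v * m1 + w * m2).

Lemma D_expect_mean (a x : R) : 0 < x < 1 ->
  D_expect al be lh ld C K p1 p0 P0 PK a x (fun t => t)
    (m1 + a * (x / (1 - x))).
Proof.
  intros Hx. exists (fun g => a * INR g + m1). split.
  - intros g. replace (a * INR g + m1) with (a * INR g + 1 * m1 + 0 * m2) by ring.
    apply Dq_quadratic. intros t. ring.
  - apply is_series_Reals.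
    apply (is_series_ext (fun g => geom_pmf x g * (m1 + a * INR g + 0 * INR g ^ 2)));
      [intros g; simpl; ring |].
    replace (m1 + a * (x / (1 - x))) with
      (m1 + a * (x / (1 - x)) + 0 * (x * (1 + x) / (1 - x) ^ 2)) by ring.
    now apply is_series_Reals, geom_moments.
Qed.

Lemma D_expect_second_moment (a x : R) : 0 < x < 1 ->
  D_expect al be lh ld C K p1 p0 P0 PK a x (fun t => t ^ 2)
    (m2 + 2 * a * m1 * (x / (1 - x)) + a ^ 2 * (x * (1 + x) / (1 - x) ^ 2)).
Proof.
  intros Hx. exists (fun g => a ^ 2 * INR g ^ 2 + 2 * a * INR g * m1 + m2). split.
  - intros g.
    replace (a ^ 2 * INR g ^ 2 + 2 * a * INR g * m1 + m2)
      with (a ^ 2 * INR g ^ 2 + 2 * a * INR g * m1 + 1 * m2) by ring.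
    apply Dq_quadratic. intros t. ring.
  - apply is_series_Reals.
    apply (is_series_ext (fun g => geom_pmf x g * (m2 + 2 * a * m1 * INR g + a ^ 2 * INR g ^ 2)));
      [intros g; simpl; ring |].
    now apply is_series_Reals, geom_moments.
Qed.

End GeometricShift.

Lemma critical_load_drifts (al be lh C : R) :
  0 < al -> 0 < be -> 0 < lh -> lam_bar al be lh < C ->
  let ld := C - lam_bar al be lh in
  0 < lh + ld - C /\ ld - C < 0 /\ be * (lh + ld - C) + al * (ld - C) = 0.
Proof.
  intros Hal Hbe Hlh HC ld.
  assert (Hlb : 0 < lam_bar al be lh) by (unfold lam_bar; apply Rdiv_lt_0_compat; nra).
  unfold ld. split; [| split]; [| lra | unfold lam_bar; field; lra].
  replace (lh + (C - lam_bar al be lh) - C) with (lh * al / (al + be))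
    by (unfold lam_bar; field; lra).
  apply Rdiv_lt_0_compat; nra.
Qed.

Lemma load_in_unit_interval (al be lh C : R) :
  0 < al -> 0 < be -> 0 < lh -> lam_bar al be lh < C -> 0 < lam_bar al be lh / C < 1.
Proof.
  intros Hal Hbe Hlh HC.
  assert (Hlb : 0 < lam_bar al be lh) by (unfold lam_bar; apply Rdiv_lt_0_compat; nra).
  split; [apply Rdiv_lt_0_compat; lra |].
  apply (Rmult_lt_reg_r C); [lra |]. unfold Rdiv. rewrite Rmult_assoc, Rinv_l; lra.
Qed.

(** In terms of the load [r = rho], the buffer size is
    [K = r C k / ((al+be) be (1-r))] with [k = al (2r-1) - be (1-r)], so
    [K >= 0] forces [k >= 0]. *)
Lemma critical_buffer_sign (al be C r : R) : 0 < al -> 0 < be -> 0 < C -> 0 < r < 1 ->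
  0 <= 1 / (al + be) * (r * C) * (al / be * (r / (1 - r) - 1) - 1) ->
  0 <= al * (2 * r - 1) - be * (1 - r).
Proof.
  intros Hal Hbe HC Hr HK.
  replace (1 / (al + be) * (r * C) * (al / be * (r / (1 - r) - 1) - 1))
    with ((al * (2 * r - 1) - be * (1 - r)) * (r * C / ((al + be) * be * (1 - r))))
    in HK by (field; lra).
  assert (Hpos : 0 < r * C / ((al + be) * be * (1 - r))).
  { apply Rdiv_lt_0_compat; [nra | apply Rmult_lt_0_compat; [nra | lra]]. }
  nra.
Qed.

Lemma critical_normalising_constant (al be C r c : R) :
  0 < al -> 0 < be -> 0 < C -> 0 < r < 1 ->
  let k := al * (2 * r - 1) - be * (1 - r) in
  let r1 := r * C * (al + be) / be + (C - r * C) - C in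
  let K := 1 / (al + be) * (r * C) * (al / be * (r / (1 - r) - 1) - 1) in
  0 <= k -> r1 * c / be + r1 * c / al + K * (c + c * al / be) = 1 ->
  c = be ^ 2 * (1 - r) / (r * C * ((al + be) * (1 - r) + k)).
Proof.
  intros Hal Hbe HC Hr k r1 K Hk Hnorm.
  assert (Hm : 0 < (al + be) * (1 - r) + k)
    by (pose proof (Rmult_lt_0_compat (al + be) (1 - r) ltac:(lra) ltac:(lra)); lra).
  assert (Hpos : 0 < r * C * ((al + be) * (1 - r) + k) / (be ^ 2 * (1 - r))).
  { apply Rdiv_lt_0_compat; [repeat apply Rmult_lt_0_compat; lra |].
    apply Rmult_lt_0_compat; [apply pow_lt |]; lra. }
  apply (Rmult_eq_reg_l (r * C * ((al + be) * (1 - r) + k) / (be ^ 2 * (1 - r)))); [| lra].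
  transitivity (r1 * c / be + r1 * c / al + K * (c + c * al / be)).
  - unfold k, r1, K. field. lra.
  - rewrite Hnorm. field. repeat split; lra.
Qed.

Lemma critical_flat_moments (al be C r : R) :
  0 < al -> 0 < be -> 0 < C -> 0 < r < 1 ->
  let k := al * (2 * r - 1) - be * (1 - r) in
  let c := be ^ 2 * (1 - r) / (r * C * ((al + be) * (1 - r) + k)) in
  let b := 1 / (al + be) in
  let lh := r * C * (al + be) / be in
  let ld := C - r * C in
  let r1 := lh + ld - C in
  let PK := r1 * c / al in
  let Ra := r * C + ld - r1 * PK in
  let w0 := ld * (r1 * c / be) / Ra in
  let D := ((lh + ld) * c + ld * (c * al / be)) * C / Ra in
  let wT := C * PK / Ra in
  let T := b * (r * C) * (al / be * (r / (1 - r) - 1) - 1) / C in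
  0 <= k ->
  mixture_mean w0 D wT T 1 0 0 = 1 /\
  mixture_mean w0 D wT T 0 1 0
    = b * (((2 * (al / be) + 1) * r - (1 + al / be)) * ((2 - be / al) * r + (be / al - 1)))
      / (2 * r * (1 - r)) /\
  mixture_mean w0 D wT T 0 0 1
    = b ^ 2 * (((2 * r - 1) * (al / be) - (1 - r)) ^ 2 * ((1 - r) * (2 * be / al) + 2 * r - 1))
      / (3 * (1 - r) ^ 2).
Proof.
  intros Hal Hbe HC Hr k c b lh ld r1 PK Ra w0 D wT T Hk.
  unfold mixture_mean, w0, D, wT, T, Ra, PK, r1, ld, lh, b, c, k in *.
  (* the admitted rate [Ra] is a positive multiple of this quantity *)
  assert (HRa : 0 < (1 - r) * (al * (1 - r) + be) + (al * (2 * r - 1) - be * (1 - r))).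
  { pose proof (Rmult_lt_0_compat (1 - r) (al * (1 - r) + be) ltac:(lra) ltac:(nra)). lra. }
  assert (Hm : 0 < (al + be) * (1 - r) + (al * (2 * r - 1) - be * (1 - r)))
    by (pose proof (Rmult_lt_0_compat (al + be) (1 - r) ltac:(lra) ltac:(lra)); lra).
  split; [| split]; field; repeat split; try lra;
    match goal with |- ?e <> 0 =>
      replace e with (r * (C * C) * al * ((1 - r) * (al * (1 - r) + be) + (al * (2 * r - 1) - be * (1 - r))))
        by ring end;
    apply Rgt_not_eq; repeat apply Rmult_lt_0_compat; lra.
Qed.

Lemma critical_Dq_moments (al be lh C c c0 : R) :
  0 < al -> 0 < be -> 0 < lh -> lam_bar al be lh < C ->
  let b := 1 / (al + be) in
  let lb := lam_bar al be lh in
  let ld := C - lb in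
  let rho := lb / C in
  let K := b * lb * (al / be * (rho / (1 - rho) - 1) - 1) in
  let r1 := lh + ld - C in
  let P0 := r1 * c / be in
  let PK := r1 * c / al in
  let Ra := R_adm al be lh ld C PK in
  let D := ((lh + ld) * c + ld * c0) * C / Ra in
  let EDq := b * (((2 * (al / be) + 1) * rho - (1 + al / be))
                  * ((2 - be / al) * rho + (be / al - 1)))
             / (2 * rho * (1 - rho)) in
  let EDq2 := b ^ 2 * (((2 * rho - 1) * (al / be) - (1 - rho)) ^ 2
                       * ((1 - rho) * (2 * be / al) + 2 * rho - 1))
              / (3 * (1 - rho) ^ 2) in
  0 <= K -> r1 * c + (ld - C) * c0 = 0 -> P0 + PK + K * (c + c0) = 1 ->
  forall u v w,
    mixture_mean (ld * P0 / Ra) D (C * PK / Ra) (K / C) u v w = u + v * EDq + w * EDq2.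
Proof.
  intros Hal Hbe Hlh HC. cbv zeta. unfold R_adm. intros HK Hc0 Hnorm u v w.
  rewrite mixture_mean_linear.
  (* reparametrise by the load [r = lam_bar / C], eliminating [lh] *)
  assert (Hlb : 0 < lam_bar al be lh) by (unfold lam_bar; apply Rdiv_lt_0_compat; nra).
  assert (HC0 : 0 < C) by lra.
  pose proof (load_in_unit_interval al be lh C Hal Hbe Hlh HC) as Hr.
  set (r := lam_bar al be lh / C) in *.
  assert (Elb : lam_bar al be lh = r * C) by (unfold r; field; lra).
  assert (Elh : lh = r * C * (al + be) / be) by (rewrite <- Elb; unfold lam_bar; field; lra).
  clearbody r. rewrite Elb in HK, Hc0, Hnorm |- *. rewrite Elh in Hc0, Hnorm |- *.
  clear Elh Elb Hlb Hlh HC.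
  pose proof (critical_buffer_sign al be C r Hal Hbe HC0 Hr HK) as Hk.
  assert (Ec0 : c0 = c * al / be).
  { apply (Rmult_eq_reg_l (r * C)); [| nra].
    transitivity ((r * C * (al + be) / be + (C - r * C) - C) * c); [lra | field; lra]. }
  subst c0.
  pose proof (critical_normalising_constant al be C r c Hal Hbe HC0 Hr Hk Hnorm) as Ec.
  subst c.
  lazymatch goal with |- u * ?A + v * ?B + w * ?C = u + v * ?E1 + w * ?E2 =>
    enough (HM : A = 1 /\ B = E1 /\ C = E2) by (destruct HM as (-> & -> & ->); ring) end.
  now apply critical_flat_moments.
Qed.

Theorem theorem2 (al be lh C a : R) (p1 p0 : R -> R) (P0 PK : R) :
  0 < al -> 0 < be -> 0 < lh -> lam_bar al be lh < C -> 0 < a ->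
  let b := 1 / (al + be) in
  let lb := lam_bar al be lh in
  let ld := C - lb in
  let rho := lb / C in
  let K := b * lb * (al / be * (rho / (1 - rho) - 1) - 1) in
  0 <= K ->
  is_stationary al be lh ld C K p1 p0 P0 PK ->
  let Pd := 1 - rho in
  let EDq := b * (((2 * (al / be) + 1) * rho - (1 + al / be))
                  * ((2 - be / al) * rho + (be / al - 1)))
             / (2 * rho * (1 - rho)) in
  let EDq2 := b ^ 2 * (((2 * rho - 1) * (al / be) - (1 - rho)) ^ 2
                       * ((1 - rho) * (2 * be / al) + 2 * rho - 1))
              / (3 * (1 - rho) ^ 2) in
  Dq_expect al be lh ld C K p1 p0 P0 PK (fun t => t) EDq /\
  Dq_expect al be lh ld C K p1 p0 P0 PK (fun t => t ^ 2) EDq2 /\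
  exists ED ED2,
    D_expect al be lh ld C K p1 p0 P0 PK a Pd (fun t => t) ED /\
    D_expect al be lh ld C K p1 p0 P0 PK a Pd (fun t => t ^ 2) ED2 /\
    ED = a * (1 - rho) / rho + EDq /\
    ED2 - ED ^ 2 = a ^ 2 * (1 - rho) / rho ^ 2 + (EDq2 - EDq ^ 2).
Proof.
  intros Hal Hbe Hlh HC _ b lb ld rho K HK Hst Pd EDq EDq2.
  destruct (critical_load_drifts al be lh C Hal Hbe Hlh HC) as (Hr1 & Hr0 & Hdrift).
  pose proof (load_in_unit_interval al be lh C Hal Hbe Hlh HC) as Hrho. fold lb rho in Hrho.
  pose proof (zero_drift_flat_densities _ _ _ _ _ _ _ _ _ _ Hst
                (Rgt_not_eq _ _ Hr1) (Rlt_not_eq _ _ Hr0) Hdrift) as Hflat.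
  destruct (flat_stationary_atoms _ _ _ _ _ _ _ _ _ _ Hst Hal Hbe HK Hflat) as (-> & -> & Hnorm).
  pose proof (stationary_zero_flux _ _ _ _ _ _ _ _ _ _ Hst (Rgt_not_eq _ _ Hr1) (Rlt_not_eq _ _ Hr0)
                0 ltac:(lra)) as Hflux0.
  assert (Hq : forall h u v w, is_quadratic h u v w ->
     Dq_expect al be lh ld C K p1 p0 ((lh + ld - C) * p1 0 / be) ((lh + ld - C) * p1 0 / al)
       h (u + v * EDq + w * EDq2)).
  { intros h u v w Hh.
    apply (flat_Dq_expect_quadratic _ _ _ _ _ _ _ _ _ _ (p1 0) (p0 0) _ u v w); try assumption.
    - lra.
    - symmetry. now apply (critical_Dq_moments al be lh C (p1 0) (p0 0)). }
  split; [| split].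
  - replace EDq with (0 + 1 * EDq + 0 * EDq2) by ring. apply Hq. intros t. ring.
  - replace EDq2 with (0 + 0 * EDq + 1 * EDq2) by ring. apply Hq. intros t. ring.
  - exists (EDq + a * (Pd / (1 - Pd))),
      (EDq2 + 2 * a * EDq * (Pd / (1 - Pd)) + a ^ 2 * (Pd * (1 + Pd) / (1 - Pd) ^ 2)).
    split; [| split; [| split]].
    + apply (D_expect_mean _ _ _ _ _ _ _ _ _ _ _ _ Hq). unfold Pd. lra.
    + apply (D_expect_second_moment _ _ _ _ _ _ _ _ _ _ _ _ Hq). unfold Pd. lra.
    + unfold Pd. field. lra.
    + unfold Pd. field. lra.
Qed.
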